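(* Let $\Gamma=(V,E)$ be a reflexive locally finite $k$-separable graph and let $X$ and $Y$ be $k$-fragments of $\Gamma$. Then $\partial^-(\nabla(X))=\partial(X)$, $\nabla^-(\nabla(X))=X$, and $X\subseteq Y$ if and only if $\nabla(Y)\subseteq\nabla(X)$. In particular, $\nabla(X)$ is a reverse-$k$-semi-fragment of $\Gamma$.
   Context: A graph is a pair $\Gamma=(V,E)$ with $E\subseteq V\times V$. For $x\in V$, $\Gamma(x)=\{y:(x,y)\in E\}$, and $\Gamma(X)=\bigcup_{x\in X}\Gamma(x)$. The reverse graph is $\Gamma^-=(V,E^-)$ with $E^-=\{(x,y):(y,x)\in E\}$. $\Gamma$ is reflexive if $(x,x)\in E$ for all $x$, locally finite if $\Gamma(x),\Gamma^-(x)$ are finite for all $x$. $\partial(X)=\Gamma(X)\setminus X$, $\nabla(X)=V\setminus\Gamma(X)$, and $\partial^-,\nabla^-$ are the same operators for $\Gamma^-$. $\Gamma$ is $k$-separable if there is a finite $X$ with $|X|\ge k$ and $|\nabla(X)|\ge k$; then $\kappa_k(\Gamma)=\min\{|\partial(X)|: X\text{ finite}, |X|\ge k, |\nabla(X)|\ge k\}$. A $k$-fragment is a finite $X$ with $|X|\ge k$, $|\nabla(X)|\ge k$, $|\partial(X)|=\kappa_k(\Gamma)$. A reverse $k$-fragment is a $k$-fragment of $\Gamma^-$. A $k$-semi-fragment of $\Gamma$ is a set $X$ that is either a $k$-fragment of $\Gamma$ or such that $\nabla(X)$ is a $k$-fragment of $\Gamma^-$; a reverse-$k$-semi-fragment of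 $\Gamma$ is a $k$-semi-fragment of $\Gamma^-$. *)

From Stdlib Require Import List Arith.
Import ListNotations.

Definition vset (V : Type) := V -> Prop.

Section Graphs.
Context {V : Type}.

Definition set_eq (A B : vset V) : Prop := forall x, A x <-> B x.
Definition subset (A B : vset V) : Prop := forall x, A x -> B x.

Definition finite (A : vset V) : Prop := exists l : list V, forall x, A x <-> In x l.
Definition card_eq (A : vset V) (n : nat) : Prop :=
  exists l : list V, NoDup l /\ length l = n /\ forall x, A x <-> In x l.
(* |A| >= k  (A possibly infinite) *)
Definition card_ge (A : vset V) (k : nat) : Prop :=
  exists l : list V, NoDup l /\ length l = k /\ forall x, In x l -> A x.

Variable E : V -> V -> Prop.

Definition image (X : vset V) : vset V := fun y => exists x, X x /\ E x y.
Definition bdry (X : vset V) : vset V := fun y => image X y /\ ~ X y.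
Definition nabla (X : vset V) : vset V := fun y => ~ image X y.

Definition reflexive : Prop := forall x, E x x.
Definition locally_finite : Prop :=
  forall x, finite (fun y => E x y) /\ finite (fun y => E y x).

Definition admissible (k : nat) (X : vset V) : Prop :=
  finite X /\ card_ge X k /\ card_ge (nabla X) k.

Definition separable (k : nat) : Prop := exists X, admissible k X.

Definition is_kappa (k n : nat) : Prop :=
  (exists X, admissible k X /\ card_eq (bdry X) n) /\
  (forall X m, admissible k X -> card_eq (bdry X) m -> n <= m).

Definition fragment (k : nat) (X : vset V) : Prop :=
  admissible k X /\ exists n, is_kappa k n /\ card_eq (bdry X) n.

End Graphs.

Definition rev {V : Type} (E : V -> V -> Prop) : V -> V -> Prop := fun x y => E y x.

Definition semi_fragment {V : Type} (E : V -> V -> Prop) (k : nat) (X : vset V) : Prop :=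
  fragment E k X \/ fragment (rev E) k (nabla E X).

Definition rev_semi_fragment {V : Type} (E : V -> V -> Prop) (k : nat) (X : vset V) : Prop :=
  semi_fragment (rev E) k X.

(* If a boundary vertex y of a k-fragment X had no out-neighbour in ∇(X), then
   Γ(y) ⊆ Γ(X), so X ∪ {y} is still admissible (it is larger and has the same
   ∇) while its boundary is ∂(X) without y, contradicting the minimality of
   |∂(X)|.  Hence every vertex of ∂(X) has an out-neighbour in ∇(X),
   i.e. ∂⁻(∇(X)) = ∂(X).  By reflexivity a vertex outside X lies in ∂(X) or
   in ∇(X), so either way it has an out-neighbour in ∇(X): ∇⁻(∇(X)) = X.  The
   remaining claims follow since ∇ is antitone. *)

From Stdlib Require Import Lia Classical FunctionalExtensionality PropExtensionality.
From Stdlib Require List.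
Import List (in_split, NoDup_remove_1, NoDup_remove_2, in_app_iff, length_app).
Open Scope list_scope.

Section Fragments.
Context {V : Type}.

Lemma set_eq_eq (A B : vset V) : set_eq A B -> A = B.
Proof.
  intro HAB. apply functional_extensionality. intro x.
  apply propositional_extensionality. apply HAB.
Qed.

Lemma card_eq_remove (A : vset V) (n : nat) (y : V) :
  card_eq A n -> A y -> 0 < n /\ card_eq (fun z => A z /\ z <> y) (n - 1).
Proof.
  intros [l [Hnd [Hlen Hl]]] Hy.
  destruct (in_split y l (proj1 (Hl y) Hy)) as [l1 [l2 ->]].
  rewrite length_app in Hlen. simpl in Hlen.
  split; [lia|].
  exists (l1 ++ l2). split; [exact (NoDup_remove_1 _ _ _ Hnd)|].
  split; [rewrite length_app; lia|].
  pose proof (NoDup_remove_2 _ _ _ Hnd) as Hny.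
  intro z. rewrite Hl, !in_app_iff. simpl. split.
  - intros [[Hz | [Hz | Hz]] Hzy]; [tauto | congruence | tauto].
  - intro Hz. split; [tauto|]. intros ->. apply Hny, in_app_iff. tauto.
Qed.

Lemma card_eq_set_eq (A B : vset V) (n : nat) :
  set_eq A B -> card_eq A n -> card_eq B n.
Proof.
  intros HAB [l [Hnd [Hlen Hl]]]. exists l. do 2 (split; [assumption|]).
  intro x. rewrite <- (HAB x). apply Hl.
Qed.

Variable E : V -> V -> Prop.

Lemma nabla_antitone (X Y : vset V) :
  subset X Y -> subset (nabla E Y) (nabla E X).
Proof. intros HXY z Hz [x [Hx Hxz]]. apply Hz. exists x. auto. Qed.

Lemma subset_nabla_rev_nabla (X : vset V) :
  subset X (nabla (rev E) (nabla E X)).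
Proof. intros x Hx [z [Hz Hxz]]. apply Hz. exists x. auto. Qed.

Lemma bdry_rev_nabla_sub (X : vset V) :
  subset (bdry (rev E) (nabla E X)) (bdry E X).
Proof.
  intros y [[z [Hz Hyz]] Hy]. split.
  - apply NNPP. exact Hy.
  - intro HXy. apply Hz. exists y. auto.
Qed.

Section AddVertex.
Variables (X : vset V) (y : V).
Hypothesis Hy_absorbed : forall z, E y z -> image E X z.

Let Xy : vset V := fun x => X x \/ x = y.

Lemma image_add_absorbed : set_eq (image E Xy) (image E X).
Proof.
  intro z. split.
  - intros [x [[Hx | ->] Hxz]]; [exists x; auto | auto].
  - intros [x [Hx Hxz]]. exists x. unfold Xy. auto.
Qed.

Lemma admissible_add_absorbed (k : nat) :
  admissible E k X -> admissible E k Xy.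
Proof.
  intros [[l Hl] [[l1 [Hnd1 [Hlen1 Hl1]]] [l2 [Hnd2 [Hlen2 Hl2]]]]].
  split; [|split].
  - exists (y :: l). intro x. unfold Xy. simpl. rewrite Hl. intuition (subst; auto).
  - exists l1. unfold Xy. auto.
  - exists l2. do 2 (split; [assumption|]).
    intros z Hz Himg. exact (Hl2 z Hz (proj1 (image_add_absorbed z) Himg)).
Qed.

Lemma bdry_add_absorbed :
  set_eq (bdry E Xy) (fun z => bdry E X z /\ z <> y).
Proof.
  intro z. unfold bdry. rewrite (image_add_absorbed z). unfold Xy. tauto.
Qed.

End AddVertex.

Lemma fragment_bdry_out_nbr (k : nat) (X : vset V) (y : V) :
  fragment E k X -> bdry E X y -> exists z, nabla E X z /\ E y z.
Proof.
  intros [HadmX [n [[_ Hmin] HcardX]]] Hy.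
  apply NNPP. intro Hno.
  assert (Habsorbed : forall z, E y z -> image E X z).
  { intros z Hyz. apply NNPP. intro Hz. apply Hno. exists z. auto. }
  destruct (card_eq_remove _ _ _ HcardX Hy) as [Hn Hcard'].
  pose proof (Hmin _ _ (admissible_add_absorbed _ _ Habsorbed k HadmX)
    (card_eq_set_eq _ _ _ (fun z => iff_sym (bdry_add_absorbed X y Habsorbed z))
       Hcard')).
  lia.
Qed.

Lemma bdry_rev_nabla_fragment (k : nat) (X : vset V) :
  fragment E k X -> set_eq (bdry (rev E) (nabla E X)) (bdry E X).
Proof.
  intros HX y. split; [apply bdry_rev_nabla_sub|].
  intro Hy. split.
  - destruct (fragment_bdry_out_nbr k X y HX Hy) as [z Hz]. exists z. exact Hz.
  - intro Hn. apply Hn. apply Hy.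
Qed.

Lemma nabla_rev_nabla_fragment (k : nat) (X : vset V) :
  reflexive E -> fragment E k X -> set_eq (nabla (rev E) (nabla E X)) X.
Proof.
  intros Hrefl HX y. split; [|apply subset_nabla_rev_nabla].
  intro Hy. apply NNPP. intro HXy.
  assert (Hb : bdry E X y).
  { split; [|exact HXy]. apply NNPP. intro Hi.
    apply Hy. exists y. split; [exact Hi | apply Hrefl]. }
  destruct (fragment_bdry_out_nbr k X y HX Hb) as [z Hz].
  apply Hy. exists z. exact Hz.
Qed.

End Fragments.

Theorem lemma3p2 (V : Type) (E : V -> V -> Prop) (k : nat)
  (Hrefl : reflexive E) (Hlf : locally_finite E) (Hsep : separable E k)
  (X Y : vset V) (HX : fragment E k X) (HY : fragment E k Y) :
  set_eq (bdry (rev E) (nabla E X)) (bdry E X) /\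
  set_eq (nabla (rev E) (nabla E X)) X /\
  (subset X Y <-> subset (nabla E Y) (nabla E X)) /\
  rev_semi_fragment E k (nabla E X).
Proof.
  pose proof (nabla_rev_nabla_fragment E k X Hrefl HX) as HXX.
  split; [|split; [|split]].
  - exact (bdry_rev_nabla_fragment E k X HX).
  - exact HXX.
  - split; [apply nabla_antitone|].
    intros HYX x Hx.
    apply (nabla_rev_nabla_fragment E k Y Hrefl HY).
    apply (nabla_antitone (rev E) _ _ HYX), subset_nabla_rev_nabla, Hx.
  - (* [rev (rev E)] is [E] by conversion. *)
    right. change (fragment E k (nabla (rev E) (nabla E X))).
    rewrite (set_eq_eq _ _ HXX). exact HX.
Qed.
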